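(* Let $\psi$ be a bounded complexity measure, $k\in\omega\setminus\{0,1\}$, $A$ a nontrivial closed class of decision tables from $\mathcal M_k^\infty$, and suppose $\mathcal H^\infty_{\psi,A}$ is everywhere defined. Then $\mathcal H^\infty_{\psi,A}$ is nondecreasing and $\mathcal H^\infty_{\psi,A}(0)=0$. Moreover: (a) if the function $\psi^d$ is bounded from above on $A$, then there is a constant $c\ge 0$ with $\mathcal H^\infty_{\psi,A}(n)\le c$ for all $n\in\omega$; (b) if $\psi^d$ is not bounded from above on $A$, then there exists an infinite subset $D\subseteq\omega$ such that $\mathcal H^\infty_{\psi,A}(n)\ge H_D(n)$ for all $n\in\omega$.
   Context: Notation: $\omega=\{0,1,2,\dots\}$; $\mathcal P(\omega)$ is the set of nonempty finite subsets of $\omega$; for $k\in\omega\setminus\{0,1\}$, $E_k=\{0,1,\dots,k-1\}$. $P=\{f_i:i\in\omega\}$ is a set of attributes, $f_i\neq f_j$ for $i\ne j$. Decision tables: $\mathcal M_k^\infty$ is the set of rectangular tables filled with numbers from $E_k$, whose columns are labeled with pairwise different attributes from $P$, whose rows are pairwise different, and each row of which is labeled with a set from $\mathcal P(\omega)$ (its set of decisions). The empty table (no rows) is denoted $\Lambda$ and belongs to $\mathcal M_k^\infty$. For $T\in\mathcal M_k^\infty$: $\Delta(T)$ is the set of rows; $\Pi(T)$ is the intersection of the decision sets of all rows (common decisions); $\mathcal M_k^{\infty c}$ is the set of tables having at least one common decision, and $\Lambda\in\mathcal M_k^{\infty c}$; $\mathrm{At}(T)$ is the set of attributes labeling columns.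 For nonempty $T$, $\Omega_k(T)$ is the set of finite words (including the empty word $\lambda$) over the alphabet $\{(f_i,\delta):f_i\in\mathrm{At}(T),\delta\in E_k\}$; for $\alpha=(f_{i_1},\delta_1)\cdots(f_{i_m},\delta_m)$, $T\alpha$ is the subtable of $T$ consisting of the rows having value $\delta_j$ in the column $f_{i_j}$ for all $j$, and $T\lambda=T$. Operations: for $D\subseteq\mathrm{At}(T)$, $I(D,T)$ is obtained from $T$ by deleting the columns labeled with attributes from $D$ and, in each group of rows coinciding on the remaining columns, keeping only the first row; $I(\mathrm{At}(T),T)=\Lambda$. For $\nu:E_k^{|\mathrm{At}(T)|}\to\mathcal P(\omega)$, $J(\nu,T)$ is obtained by replacing the decision set of each row $\bar\delta$ by $\nu(\bar\delta)$. $[T]=\{J(\nu,I(D,T)):D\subseteq\mathrm{At}(T),\ \nu:E_k^{|\mathrm{At}(T)\setminus D|}\to\mathcal P(\omega)\}$; for nonempty $A\subseteq\mathcal M_k^\infty$, $[A]=\bigcup_{T\in A}[T]$. $A$ is a closed class if $[A]=A$; it is nontrivial if it contains a nonempty table. Decision trees: a $k$-decision tree is a finite directed rooted tree with at least two nodes in which the root and the edges leaving the root are unlabeled, each terminal node is labeled with a decision from $\omega$, and each other node is labeled with an attribute from $P$, each edge leaving such a node being labeled with a number from $E_k$. $\mathrm{At}(\Gamma)$ is the set of attributes labeling nodes of $\Gamma$. For a complete path $\tau=v_1,d_1,\dots,v_m,d_m,v_{m+1}$ (from the root to a terminal node), $\pi(\tau)=\lambda$ if $m=1$, and otherwise $\pi(\tau)=(f_{i_2},\delta_2)\cdots(f_{i_m},\delta_m)$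 where $v_j$ is labeled $f_{i_j}$ and $d_j$ is labeled $\delta_j$; $T(\tau)=T\pi(\tau)$. For $T\ne\Lambda$, a nondeterministic decision tree for $T$ is a $k$-decision tree $\Gamma$ with $\mathrm{At}(\Gamma)\subseteq\mathrm{At}(T)$ such that every row of $T$ belongs to $T(\tau)$ for some complete path $\tau$, and for every complete path $\tau$ either $T(\tau)=\Lambda$ or the decision at the terminal node of $\tau$ belongs to $\Pi(T(\tau))$. A deterministic decision tree for $T$ is a nondeterministic decision tree for $T$ in which, additionally, exactly one edge leaves the root and the edges leaving any node that is neither the root nor terminal are labeled with pairwise different numbers. Complexity measures: a partially bounded complexity measure is a function $\psi:P^*\to\omega$ on finite words over $P$ such that for all words $\alpha_1,\alpha_2$: $\psi(\alpha_1)=0$ iff $\alpha_1=\lambda$; $\psi(\alpha_1)$ is invariant under permutation of letters; $\psi(\alpha_1)\le\psi(\alpha_1\alpha_2)$; $\psi(\alpha_1\alpha_2)\le\psi(\alpha_1)+\psi(\alpha_2)$. It is bounded if in addition $\psi(\alpha)\ge|\alpha|$ for all $\alpha$. $\psi$ is extended to words $(f_{i_1},\delta_1)\cdots(f_{i_m},\delta_m)$ by $\psi(f_{i_1}\cdots f_{i_m})$. For a $k$-decision tree $\Gamma$, $\psi(\Gamma)=\max_\tau\psi(\pi(\tau))$ over complete paths. For $T\ne\Lambda$, $\psi^d(T)$ (resp. $\psi^a(T)$) is the minimum of $\psi(\Gamma)$ over deterministic (resp. nondeterministic) decision trees $\Gamma$ for $T$; $\psi^d(\Lambda)=\psi^a(\Lambda)=0$.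 $\mathcal H^\infty_{\psi,A}(n)$ is undefined if the set $\{\psi^d(T):T\in A,\ \psi^a(T)\le n\}$ is infinite, and otherwise equals its maximum. For an infinite set $D=\{n_i:i\in\omega\}\subseteq\omega$ with $n_i<n_{i+1}$, $H_D:\omega\to\omega$ is defined by $H_D(n)=0$ if $n<n_0$ and $H_D(n)=n_i$ if $n_i\le n<n_{i+1}$. *)

From mathcomp Require Import all_boot all_order.
From mathcomp Require Import finmap.
From Stdlib Require Import ClassicalEpsilon.

Set Implicit Arguments.
Unset Strict Implicit.
Unset Printing Implicit Defensive.

Local Open Scope fset_scope.

(* Attributes f_i are represented by their index i : nat; decisions are nats.
   A table: ordered list of column attributes, ordered list of rows; each row
   is (tuple of values, set of decisions). *)
Record table := Table { cols : seq nat ; rows : seq (seq nat * {fset nat}) }.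

Definition Lam : table := Table [::] [::].

Definition wf_table (k : nat) (T : table) : Prop :=
  T = Lam \/
  [/\ cols T != [::], rows T != [::], uniq (cols T), uniq (map fst (rows T)) &
      all (fun r : seq nat * {fset nat} =>
             [&& size r.1 == size (cols T), all (fun v => v < k) r.1 &
                 r.2 != fset0]) (rows T)].

Definition val_at (T : table) (r : seq nat) (f : nat) : nat :=
  nth 0 r (index f (cols T)).

Definition subtable (T : table) (alpha : seq (nat * nat)) : table :=
  let rs := [seq r <- rows T |
              all (fun p : nat * nat => val_at T r.1 p.1 == p.2) alpha] in
  if rs is [::] then Lam else Table (cols T) rs.

Definition in_Pi (d : nat) (T : table) : bool :=
  all (fun r : seq nat * {fset nat} => d \in r.2) (rows T).

Fixpoint keep_first (s : seq (seq nat * {fset nat})) (seen : seq (seq nat))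
  : seq (seq nat * {fset nat}) :=
  match s with
  | [::] => [::]
  | r :: s' => if r.1 \in seen then keep_first s' seen
               else r :: keep_first s' (r.1 :: seen)
  end.

Definition delI (D : seq nat) (T : table) : table :=
  if all (fun c => c \in D) (cols T) then Lam else
  Table [seq c <- cols T | c \notin D]
        (keep_first
           [seq ([seq x.2 | x <- zip (cols T) r.1 & x.1 \notin D], r.2)
           | r <- rows T] [::]).

Definition setJ (nu : seq nat -> {fset nat}) (T : table) : table :=
  Table (cols T) [seq (r.1, nu r.1) | r <- rows T].

Definition in_closure (k : nat) (T T' : table) : Prop :=
  exists (D : seq nat) (nu : seq nat -> {fset nat}),
    [/\ all (fun c => c \in cols T) D,
        (forall v : seq nat,
            size v = size [seq c <- cols T | c \notin D] ->
            all (fun x => x < k) v -> nu v != fset0) &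
        T' = setJ nu (delI D T)].

Definition closed_class (k : nat) (A : table -> Prop) : Prop :=
  (forall T, A T -> wf_table k T) /\
  (forall T', A T' <-> exists T, A T /\ in_closure k T T').

Definition nontrivial (A : table -> Prop) : Prop := exists T, A T /\ T <> Lam.

Inductive dnode := DLeaf of nat | DNode of nat & seq (nat * dnode).
(* A k-decision tree: the unlabelled root with its (unlabelled) outgoing
   edges, i.e. the list of children of the root. *)
Definition dtree := seq dnode.

Fixpoint node_wf (k : nat) (det : bool) (t : dnode) : bool :=
  match t with
  | DLeaf _ => true
  | DNode a ch =>
      [&& 0 < size ch, all (fun e : nat * dnode => e.1 < k) ch,
          (~~ det || uniq (map fst ch)) &
          (fix go (l : seq (nat * dnode)) : bool :=
             match l with
             | [::] => true
             | (_, c) :: l' => node_wf k det c && go l'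
             end) ch]
  end.

Definition tree_wf (k : nat) (det : bool) (G : dtree) : bool :=
  (0 < size G) && all (node_wf k det) G.

Fixpoint node_attrs (t : dnode) : seq nat :=
  match t with
  | DLeaf _ => [::]
  | DNode a ch =>
      a :: (fix go (l : seq (nat * dnode)) : seq nat :=
              match l with
              | [::] => [::]
              | (_, c) :: l' => node_attrs c ++ go l'
              end) ch
  end.

Definition tree_attrs (G : dtree) : seq nat := flatten (map node_attrs G).

Fixpoint node_paths (t : dnode) : seq (seq (nat * nat) * nat) :=
  match t with
  | DLeaf d => [:: ([::], d)]
  | DNode a ch =>
      (fix go (l : seq (nat * dnode)) : seq (seq (nat * nat) * nat) :=
         match l with
         | [::] => [::]
         | (delta, c) :: l' =>
             [seq ((a, delta) :: p.1, p.2) | p <- node_paths c] ++ go l'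
         end) ch
  end.

(* complete paths tau of the tree, as pairs (pi(tau), terminal decision) *)
Definition tree_paths (G : dtree) : seq (seq (nat * nat) * nat) :=
  flatten (map node_paths G).

Definition nondet_tree_for (k : nat) (T : table) (G : dtree) : Prop :=
  [/\ tree_wf k false G,
      all (fun a => a \in cols T) (tree_attrs G),
      (forall r, r \in rows T ->
         exists2 p, p \in tree_paths G & r \in rows (subtable T p.1)) &
      (forall p, p \in tree_paths G ->
         subtable T p.1 = Lam \/ in_Pi p.2 (subtable T p.1))].

Definition det_tree_for (k : nat) (T : table) (G : dtree) : Prop :=
  [/\ nondet_tree_for k T G, size G = 1 & tree_wf k true G].

Definition complexity_measure (psi : seq nat -> nat) : Prop :=
  [/\ (forall a, psi a = 0 <-> a = [::]),
      (forall a b, perm_eq a b -> psi a = psi b),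
      (forall a b, psi a <= psi (a ++ b)) &
      (forall a b, psi (a ++ b) <= psi a + psi b)].

Definition bounded_measure (psi : seq nat -> nat) : Prop :=
  complexity_measure psi /\ (forall a, size a <= psi a).

Definition tree_cost (psi : seq nat -> nat) (G : dtree) : nat :=
  \max_(p <- tree_paths G) psi (map fst p.1).

Definition is_min_cost (psi : seq nat -> nat) (good : dtree -> Prop) (n : nat)
  : Prop :=
  (exists G, good G /\ tree_cost psi G = n) /\
  (forall G, good G -> n <= tree_cost psi G).

Definition psi_d (psi : seq nat -> nat) (k : nat) (T : table) : nat :=
  epsilon (inhabits 0) (fun n =>
    (T = Lam /\ n = 0) \/ (T <> Lam /\ is_min_cost psi (det_tree_for k T) n)).

Definition psi_a (psi : seq nat -> nat) (k : nat) (T : table) : nat :=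
  epsilon (inhabits 0) (fun n =>
    (T = Lam /\ n = 0) \/ (T <> Lam /\ is_min_cost psi (nondet_tree_for k T) n)).

(* H^infty_{psi,A}(n) is defined: the set {psi^d(T) : T in A, psi^a(T) <= n}
   is finite, i.e. bounded *)
Definition H_defined (psi : seq nat -> nat) (k : nat) (A : table -> Prop)
  (n : nat) : Prop :=
  exists b, forall T, A T -> psi_a psi k T <= n -> psi_d psi k T <= b.

Definition H (psi : seq nat -> nat) (k : nat) (A : table -> Prop) (n : nat)
  : nat :=
  epsilon (inhabits 0) (fun m =>
    (exists T, A T /\ psi_a psi k T <= n /\ psi_d psi k T = m) /\
    (forall T, A T -> psi_a psi k T <= n -> psi_d psi k T <= m)).

Definition infinite_nat (D : pred nat) : Prop :=
  forall m, exists n, m < n /\ D n.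

(* H_D(n): 0 if n < min D, else the largest element of D that is <= n *)
Definition H_D (D : pred nat) (n : nat) : nat := \max_(i < n.+1 | D i) i.

(* Every table T in M_k^infty has a deterministic decision tree that queries
   all its columns, so psi^a(T) <= psi^d(T) and the extremal values defining
   psi^a, psi^d and H are attained.  Monotonicity of H is then immediate, and
   (b) holds with D the (infinite) range of psi^d on A: a table T with
   psi^d(T) = i <= n has psi^a(T) <= n, hence i <= H(n).  For H(0) = 0: a
   nondeterministic tree of cost 0 has only empty paths (psi vanishes only on
   the empty word), so T has a common decision and a single leaf is a
   deterministic tree of cost 0. *)
From mathcomp Require Import all_boot all_order finmap.
From Stdlib Require Import Classical ClassicalEpsilon.
Set Implicit Arguments.
Unset Strict Implicit.
Unset Printing Implicit Defensive.

Local Open Scope fset_scope.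

Lemma node_paths_DNode a ch : node_paths (DNode a ch) =
  flatten [seq [seq ((a, e.1) :: p.1, p.2) | p <- node_paths e.2] | e <- ch].
Proof. by elim: ch => [|[d c] l IH] //=; rewrite -IH. Qed.

Lemma node_attrs_DNode a ch : node_attrs (DNode a ch) =
  a :: flatten [seq node_attrs e.2 | e <- ch].
Proof. by elim: ch => [|[d c] l IH] //=; case: IH => ->. Qed.

Lemma node_wf_DNode k det a ch : node_wf k det (DNode a ch) =
  [&& 0 < size ch, all (fun e : nat * dnode => e.1 < k) ch,
      (~~ det || uniq (map fst ch)) & all (fun e => node_wf k det e.2) ch].
Proof.
rewrite /=; congr [&& _, _, _ & _].
by elim: ch => [|[d c] l IH] //=; rewrite IH.
Qed.

Fixpoint complete_tree (k : nat) (cs : seq nat) (f : seq (nat * nat) -> nat)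
  : dnode :=
  match cs with
  | [::] => DLeaf (f [::])
  | c :: cs' =>
      DNode c [seq (i, complete_tree k cs' (fun w => f ((c, i) :: w)))
              | i <- iota 0 k]
  end.

Section CompleteTree.

Variable k : nat.

Lemma complete_tree_wf det cs f : 0 < k -> node_wf k det (complete_tree k cs f).
Proof.
move=> k_gt0; elim: cs f => [|c cs IH] f //.
rewrite [complete_tree _ _ _]/= node_wf_DNode size_map size_iota k_gt0 /=.
rewrite -map_comp; apply/and3P; split.
- by rewrite all_map; apply/allP => i; rewrite mem_iota.
- by rewrite map_id_in ?iota_uniq ?orbT.
- by rewrite all_map; apply/allP => i _ /=.
Qed.

Lemma complete_tree_attrs cs f a :
  a \in node_attrs (complete_tree k cs f) -> a \in cs.
Proof.
elim: cs f => [|c cs IH] f //.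
rewrite [complete_tree _ _ _]/= node_attrs_DNode in_cons.
case/orP=> [/eqP ->|]; first exact: mem_head.
rewrite -map_comp => /flattenP [s /mapP [i _ ->]] /= /IH a_cs.
by rewrite in_cons a_cs orbT.
Qed.

Lemma complete_tree_pathsP cs f p : p \in node_paths (complete_tree k cs f) ->
  exists2 vs, size vs = size cs & p = (zip cs vs, f (zip cs vs)).
Proof.
elim: cs f p => [|c cs IH] f p.
  by rewrite inE => /eqP ->; exists [::].
rewrite [complete_tree _ _ _]/= node_paths_DNode -map_comp.
case/flattenP=> s /mapP [i _ ->] /mapP [q /IH [vs size_vs ->] ->].
by exists (i :: vs); rewrite /= ?size_vs.
Qed.

Lemma mem_complete_tree_paths cs f vs :
  size vs = size cs -> all (fun x => x < k) vs ->
  (zip cs vs, f (zip cs vs)) \in node_paths (complete_tree k cs f).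
Proof.
elim: cs f vs => [|c cs IH] f [|v vs] //; first by rewrite inE.
move=> [size_vs] /andP [v_lt vs_lt].
rewrite [complete_tree _ _ _]/= node_paths_DNode -map_comp.
apply/flattenP; eexists; first by apply/mapP; exists v; rewrite ?mem_iota.
apply/mapP; exists (zip cs vs, f ((c, v) :: zip cs vs)) => //.
exact: (IH (fun w => f ((c, v) :: w))).
Qed.

End CompleteTree.

Definition matches (T : table) (x : seq nat) (alpha : seq (nat * nat)) : bool :=
  all (fun p : nat * nat => val_at T x p.1 == p.2) alpha.

Lemma rows_subtable T alpha :
  rows (subtable T alpha) = [seq r <- rows T | matches T r.1 alpha].
Proof. by rewrite /subtable; case: [seq _ <- _ | _]. Qed.

Lemma subtable_eq_Lam T alpha :
  rows (subtable T alpha) = [::] -> subtable T alpha = Lam.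
Proof. by rewrite rows_subtable /subtable => ->. Qed.

Lemma subtable_nil T : rows T != [::] -> subtable T [::] = T.
Proof. by case: T => c [|r rs] //= _; rewrite /subtable /= filter_predT. Qed.

Lemma matches_zip_cols T x vs : uniq (cols T) ->
  size x = size (cols T) -> size vs = size (cols T) ->
  matches T x (zip (cols T) vs) = (x == vs).
Proof.
move=> uniq_cols size_x size_vs.
apply/(all_nthP (0, 0))/eqP => [x_vs|-> i]; last first.
  rewrite size_zip size_vs minnn => i_lt.
  by rewrite nth_zip ?size_vs //= /val_at index_uniq ?size_vs.
apply: (eq_from_nth (x0 := 0)) => [|i i_lt]; first by rewrite size_x size_vs.
have := x_vs i; rewrite size_zip size_vs minnn -size_x nth_zip ?size_vs //=.
by rewrite /val_at index_uniq -?size_x // => /(_ i_lt)/eqP.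
Qed.

Lemma uniq_map_inj_in (T1 T2 : eqType) (f : T1 -> T2) (s : seq T1) :
  uniq (map f s) -> {in s &, injective f}.
Proof.
elim: s => [|x s IH] //= /andP [fx_notin uniq_fs] y z.
rewrite !in_cons => /orP [/eqP ->|ys] /orP [/eqP ->|zs] //.
- by move=> fx_fz; case/negP: fx_notin; rewrite fx_fz map_f.
- by move=> fy_fx; case/negP: fx_notin; rewrite -fy_fx map_f.
- exact: IH.
Qed.

Lemma wf_table_rows k T : wf_table k T -> T <> Lam -> rows T != [::].
Proof. by case=> [->|[]]. Qed.

Lemma mem_head_fset (X : {fset nat}) : X != fset0 -> head 0 X \in X.
Proof.
rewrite -cardfs_gt0; have mem_enum x : (x \in X) = (x \in enum_fset X) by [].
by rewrite mem_enum /=; case: (enum_fset X) => //= x s _; apply: mem_head.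
Qed.

(* The value 0 on a leaf that no row reaches is arbitrary. *)
Definition first_row_decision (T : table) (alpha : seq (nat * nat)) : nat :=
  if rows (subtable T alpha) is r :: _ then head 0 (enum_fset r.2) else 0.

Section DeterministicTree.

Variables (k : nat) (T : table).
Hypotheses (k_gt0 : 0 < k) (wfT : wf_table k T) (T_neq : T <> Lam).

Let GT : dtree := [:: complete_tree k (cols T) (first_row_decision T)].

Lemma full_word_in_Pi vs : size vs = size (cols T) ->
  let alpha := zip (cols T) vs in
  rows (subtable T alpha) = [::] \/
  in_Pi (first_row_decision T alpha) (subtable T alpha).
Proof.
case: wfT => [//|[_ _ uniq_cols uniq_rows all_rows]] size_vs alpha.
have row_eq s : s \in rows T -> matches T s.1 alpha -> s.1 = vs.
  move=> s_in; have /and3P [/eqP size_s _ _] := allP all_rows s s_in.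
  by rewrite /alpha matches_zip_cols // => /eqP.
rewrite /in_Pi /first_row_decision.
case E: (rows (subtable T alpha)) => [|r0 rs]; [by left | right].
have : r0 \in rows (subtable T alpha) by rewrite E mem_head.
rewrite -E rows_subtable mem_filter => /andP [m0 r0T].
apply/allP => r; rewrite mem_filter => /andP [m rT].
have -> : r = r0 by apply: (uniq_map_inj_in uniq_rows); rewrite // row_eq // row_eq.
by have /and3P [_ _ /mem_head_fset] := allP all_rows r0 r0T.
Qed.

Lemma complete_tree_det : det_tree_for k T GT.
Proof.
case: (wfT) => [//|[_ _ uniq_cols _ all_rows]].
have paths_GT : tree_paths GT =
  node_paths (complete_tree k (cols T) (first_row_decision T)).
  by rewrite /tree_paths /= cats0.
have wf_GT det : tree_wf k det GT by rewrite /tree_wf /= complete_tree_wf.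
split=> //; split=> //.
- apply/allP => a; rewrite /tree_attrs /= cats0; exact: complete_tree_attrs.
- move=> r r_in; have /and3P [/eqP size_r r_lt _] := allP all_rows r r_in.
  set alpha := zip (cols T) r.1.
  rewrite paths_GT; exists (alpha, first_row_decision T alpha).
    exact: mem_complete_tree_paths.
  by rewrite rows_subtable mem_filter /= matches_zip_cols ?eqxx.
- rewrite paths_GT => p /complete_tree_pathsP [vs size_vs ->] /=.
  by case: (full_word_in_Pi size_vs) => [/subtable_eq_Lam|]; [left|right].
Qed.

End DeterministicTree.

Lemma exists_minimal (P : nat -> Prop) n0 :
  P n0 -> exists2 n, P n & forall m, P m -> n <= m.
Proof.
elim/ltn_ind: n0 => n0 IH P_n0.
case: (classic (exists2 m, m < n0 & P m)) => [[m m_lt P_m]|no_smaller].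
  exact: IH m_lt P_m.
exists n0 => // m P_m; rewrite leqNgt; apply/negP => m_lt.
by apply: no_smaller; exists m.
Qed.

Lemma exists_maximal (P : nat -> Prop) b n0 :
  P n0 -> (forall n, P n -> n <= b) -> exists m, P m /\ forall n, P n -> n <= m.
Proof.
move=> P_n0 /(exists_minimal (P := fun m => forall n, P n -> n <= m)).
case=> m ub_m least_m; exists m; split=> //; apply: NNPP => not_Pm.
have lt_m n : P n -> n < m.
  move=> P_n; rewrite ltn_neqAle ub_m // andbT.
  by apply/eqP => n_m; apply: not_Pm; rewrite -n_m.
have m_gt0 : 0 < m by apply: leq_ltn_trans (lt_m _ P_n0).
suff : m <= m.-1 by rewrite leqNgt ltn_predL m_gt0.
by apply: least_m => n /lt_m n_lt; rewrite -ltnS prednK.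
Qed.

Lemma is_min_cost_exists psi (good : dtree -> Prop) :
  (exists G, good G) -> exists n, is_min_cost psi good n.
Proof.
case=> G good_G.
have [n [G' [good_G' <-]] least] :=
  exists_minimal (P := fun n => exists G, good G /\ tree_cost psi G = n)
    (ex_intro _ G (conj good_G erefl)).
exists (tree_cost psi G'); split=> [|G2 good_G2]; first by exists G'.
by apply: least; exists G2.
Qed.

(* The common shape of [psi_d] and [psi_a]. *)
Lemma min_cost_choice psi (good : dtree -> Prop) T :
  let c := epsilon (inhabits 0) (fun n =>
    (T = Lam /\ n = 0) \/ (T <> Lam /\ is_min_cost psi good n)) in
  (T = Lam -> c = 0) /\ (T <> Lam -> (exists G, good G) -> is_min_cost psi good c).
Proof.
set P := fun n => _ \/ _; move=> c.
have c_spec n : P n -> P c by move=> P_n; apply: epsilon_spec; exists n.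
split=> [T_Lam | T_neq /(is_min_cost_exists psi) [n n_min]].
- by case: (c_spec 0 (or_introl (conj T_Lam erefl))) => [[]|[]].
- by case: (c_spec n (or_intror (conj T_neq n_min))) => [[]|[]].
Qed.

Section Complexities.

Variables (psi : seq nat -> nat) (k : nat).

Lemma psi_d_Lam : psi_d psi k Lam = 0.
Proof. exact: (proj1 (min_cost_choice _ _ _)). Qed.

Lemma psi_a_Lam : psi_a psi k Lam = 0.
Proof. exact: (proj1 (min_cost_choice _ _ _)). Qed.

Lemma psi_d_spec T : T <> Lam -> (exists G, det_tree_for k T G) ->
  is_min_cost psi (det_tree_for k T) (psi_d psi k T).
Proof. exact: (proj2 (min_cost_choice _ _ _)). Qed.

Lemma psi_a_spec T : T <> Lam -> (exists G, nondet_tree_for k T G) ->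
  is_min_cost psi (nondet_tree_for k T) (psi_a psi k T).
Proof. exact: (proj2 (min_cost_choice _ _ _)). Qed.

Hypothesis k_gt0 : 0 < k.

Lemma psi_a_le_psi_d T : wf_table k T -> psi_a psi k T <= psi_d psi k T.
Proof.
move=> wfT; case: (classic (T = Lam)) => [->|T_neq]; first by rewrite psi_a_Lam.
have det_T := complete_tree_det k_gt0 wfT T_neq.
have [[G [[nondet_G _ _] <-]] _] := psi_d_spec T_neq (ex_intro _ _ det_T).
by have [_ ->] := psi_a_spec T_neq (ex_intro _ _ nondet_G).
Qed.

Hypothesis psi_measure : complexity_measure psi.

Lemma zero_cost_paths G p :
  tree_cost psi G = 0 -> p \in tree_paths G -> p.1 = [::].
Proof.
move=> cost0 p_in; have [psi0 _ _ _] := psi_measure.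
have : psi (map fst p.1) <= tree_cost psi G.
  exact: (leq_bigmax_seq (F := fun p : seq (nat * nat) * nat => psi (map fst p.1))).
by rewrite cost0 leqn0 => /eqP/psi0; case: (p.1).
Qed.

Lemma psi_a_eq0_in_Pi T : wf_table k T -> T <> Lam ->
  psi_a psi k T = 0 -> exists d, in_Pi d T.
Proof.
move=> wfT T_neq psi_a0.
have [nondet_T _ _] := complete_tree_det k_gt0 wfT T_neq.
have [[G [[_ _ covers decides] cost_G]] _] :=
  psi_a_spec T_neq (ex_intro _ _ nondet_T).
have := wf_table_rows wfT T_neq.
case rowsT: (rows T) => [//|r0 rs] _.
have [p p_in _] : exists2 p, p \in tree_paths G & r0 \in rows (subtable T p.1).
  by apply: covers; rewrite rowsT mem_head.
have p_nil := zero_cost_paths (etrans cost_G psi_a0) p_in.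
by exists p.2; case: (decides p p_in); rewrite p_nil subtable_nil ?rowsT.
Qed.

Lemma psi_d_eq0_of_in_Pi T d :
  T <> Lam -> rows T != [::] -> in_Pi d T -> psi_d psi k T = 0.
Proof.
move=> T_neq rowsT d_Pi; have [psi0 _ _ _] := psi_measure.
have leaf_det : det_tree_for k T [:: DLeaf d].
  split=> //; split=> //.
  - by move=> r r_in; exists ([::], d); rewrite ?inE // subtable_nil.
  - by move=> p; rewrite /tree_paths /= inE => /eqP -> /=; rewrite subtable_nil //; right.
have [_ least] := psi_d_spec T_neq (ex_intro _ _ leaf_det).
apply/eqP; rewrite -leqn0; apply: leq_trans (least _ leaf_det) _.
by rewrite /tree_cost /tree_paths /= big_cons big_nil (proj2 (psi0 [::])).
Qed.

Lemma psi_d_eq0 T : wf_table k T -> psi_a psi k T = 0 -> psi_d psi k T = 0.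
Proof.
move=> wfT psi_a0; case: (classic (T = Lam)) => [->|T_neq]; first exact: psi_d_Lam.
have [d d_Pi] := psi_a_eq0_in_Pi wfT T_neq psi_a0.
exact: psi_d_eq0_of_in_Pi T_neq (wf_table_rows wfT T_neq) d_Pi.
Qed.

End Complexities.

Lemma closed_class_Lam k (A : table -> Prop) :
  closed_class k A -> nontrivial A -> A Lam.
Proof.
case=> _ closedA [T0 [AT0 _]]; apply/closedA; exists T0; split=> //.
have all_cols : all (fun c => c \in cols T0) (cols T0) by apply/allP.
exists (cols T0), (fun _ => [fset 0]); split=> //; last by rewrite /delI all_cols.
by move=> v _ _; apply/fset0Pn; exists 0; rewrite inE.
Qed.

Section HFunction.

Variables (psi : seq nat -> nat) (k : nat) (A : table -> Prop).
Hypotheses (k_gt0 : 0 < k) (wfA : forall T, A T -> wf_table k T) (A_Lam : A Lam).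
Hypothesis H_def : forall n, H_defined psi k A n.

Definition is_max_psi_d (n m : nat) : Prop :=
  (exists T, A T /\ psi_a psi k T <= n /\ psi_d psi k T = m) /\
  (forall T, A T -> psi_a psi k T <= n -> psi_d psi k T <= m).

Lemma H_spec n : is_max_psi_d n (H psi k A n).
Proof.
apply: (epsilon_spec (inhabits 0) (is_max_psi_d n)).
have [b bounded] := H_def n.
pose P m := exists T, A T /\ psi_a psi k T <= n /\ psi_d psi k T = m.
have P_Lam : P (psi_d psi k Lam) by exists Lam; rewrite psi_a_Lam.
have bounded_P m : P m -> m <= b by case=> T [AT [aT <-]]; apply: bounded.
have [m [[T [AT [aT dT]]] max_m]] := exists_maximal P_Lam bounded_P.
exists m; split; first by exists T.
by move=> T' AT' aT'; apply: max_m; exists T'.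
Qed.

Lemma psi_d_le_H T n : A T -> psi_a psi k T <= n -> psi_d psi k T <= H psi k A n.
Proof. exact: (proj2 (H_spec n)). Qed.

Lemma H_homo : {homo H psi k A : m n / m <= n}.
Proof.
move=> m n le_mn; have [[T [AT [aT <-]]] _] := H_spec m.
by apply: psi_d_le_H => //; apply: leq_trans aT le_mn.
Qed.

Lemma H_zero : complexity_measure psi -> H psi k A 0 = 0.
Proof.
move=> psi_measure; have [[T [AT [aT <-]]] _] := H_spec 0.
by apply: psi_d_eq0 => //; [exact: wfA | apply/eqP; rewrite -leqn0].
Qed.

Lemma H_bounded c : (forall T, A T -> psi_d psi k T <= c) -> forall n, H psi k A n <= c.
Proof. by move=> bounded n; have [[T [AT [_ <-]]] _] := H_spec n; apply: bounded. Qed.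

Definition psi_d_range : pred nat := fun d =>
  if excluded_middle_informative (exists2 T, A T & psi_d psi k T = d)
  then true else false.

Lemma psi_d_range_infinite :
  ~ (exists c, forall T, A T -> psi_d psi k T <= c) -> infinite_nat psi_d_range.
Proof.
move=> unbounded m; apply: NNPP => no_larger; apply: unbounded; exists m.
move=> T AT; rewrite leqNgt; apply/negP => m_lt; apply: no_larger.
exists (psi_d psi k T); split=> //; rewrite /psi_d_range.
by case: excluded_middle_informative => // -[]; exists T.
Qed.

Lemma H_D_psi_d_range_le_H n : H_D psi_d_range n <= H psi k A n.
Proof.
apply/bigmax_leqP => i; rewrite /psi_d_range.
case: excluded_middle_informative => // -[T AT dT] _.
rewrite -dT; apply: psi_d_le_H => //.
by apply: leq_trans (psi_a_le_psi_d psi k_gt0 (wfA AT)) _; rewrite dT -ltnS.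
Qed.

End HFunction.

Theorem theorem2 (psi : seq nat -> nat) (k : nat) (A : table -> Prop) :
  bounded_measure psi -> 1 < k -> closed_class k A -> nontrivial A ->
  (forall n, H_defined psi k A n) ->
  [/\ (forall m n, m <= n -> H psi k A m <= H psi k A n),
      H psi k A 0 = 0,
      ((exists c, forall T, A T -> psi_d psi k T <= c) ->
         exists c, forall n, H psi k A n <= c) &
      (~ (exists c, forall T, A T -> psi_d psi k T <= c) ->
         exists D : pred nat, infinite_nat D /\
           forall n, H_D D n <= H psi k A n)].
Proof.
move=> [psi_measure _] k_gt1 closedA nontrivA H_def.
have k_gt0 : 0 < k by apply: ltnW.
have wfA := proj1 closedA.
have A_Lam := closed_class_Lam closedA nontrivA.
split.
- exact: H_homo.
- exact: H_zero.
- by case=> c bounded; exists c; apply: H_bounded.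
- move=> unbounded; exists (psi_d_range psi k A); split.
  + exact: psi_d_range_infinite.
  + exact: H_D_psi_d_range_le_H.
Qed.
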